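(* Every finite frame $(X,R)$ that is the image of the frame $(\mathbb{R},R_{>1})$ under a surjective p-morphism has small anti-clique overlaps.
   Context: $(\mathbb{R},R_{>1})$ is the frame with $xR_{>1}y$ iff $|x-y|>1$. A p-morphism $f:(Y,S)\to(X,R)$ is a map such that $ySy'$ implies $f(y)Rf(y')$, and whenever $f(y)Rx'$ there is $y'$ with $ySy'$ and $f(y')=x'$. An anti-clique in $(X,R)$ is a subset $\Sigma$ such that $xRy$ holds for no $x,y\in\Sigma$; a maximal anti-clique is one not properly contained in another anti-clique. $(X,R)$ has small anti-clique overlaps if any two distinct maximal anti-cliques have at most one element in common. *)

From Stdlib Require Import Reals List.
Open Scope R_scope.

Definition Rgt1 (x y : R) : Prop := Rabs (x - y) > 1.

Definition p_morphism {Y X : Type} (S : Y -> Y -> Prop) (Rx : X -> X -> Prop)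
  (f : Y -> X) : Prop :=
  (forall y y', S y y' -> Rx (f y) (f y')) /\
  (forall y x', Rx (f y) x' -> exists y', S y y' /\ f y' = x').

Definition surjective {Y X : Type} (f : Y -> X) : Prop :=
  forall x, exists y, f y = x.

Definition finite_type (X : Type) : Prop :=
  exists l : list X, forall x, In x l.

Definition anti_clique {X : Type} (Rx : X -> X -> Prop) (S : X -> Prop) : Prop :=
  forall x y, S x -> S y -> ~ Rx x y.

Definition maximal_anti_clique {X : Type} (Rx : X -> X -> Prop) (S : X -> Prop)
  : Prop :=
  anti_clique Rx S /\
  forall T : X -> Prop, anti_clique Rx T -> (forall x, S x -> T x) ->
    (forall x, T x -> S x).

Definition small_anti_clique_overlaps {X : Type} (Rx : X -> X -> Prop) : Prop :=
  forall S1 S2 : X -> Prop,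
    maximal_anti_clique Rx S1 -> maximal_anti_clique Rx S2 ->
    ~ (forall x, S1 x <-> S2 x) ->
    forall x y, S1 x -> S2 x -> S1 y -> S2 y -> x = y.

(** For [v : X] and [t : R], [~ Rx (f t) v] holds exactly when the fibre of
    [v] lies in [[t - 1, t + 1]]; if that fibre has hull [[lo, hi]], this says
    that [t] lies in the shadow [[hi - 1, lo + 1]] of [v], which is therefore a
    union of fibres.

    If two distinct maximal anti-cliques shared points [x <> y], maximality
    would give related irreflexive points [w], [z] with [a + 1 < b] for some [a]
    over [w] and [b] over [z], while the fibres of [x] and [y] lie in the common
    shadow [[hi_z - 1, lo_w + 1]], which is thus non-degenerate.  The images of
    [hi_w - 1] and [lo_w + 1] (or of a midpoint, when the fibre of [w] is a
    single point) form a new such configuration whose first point lies strictly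
    left of the fibre of [w]; iterating yields infinitely many distinct points
    of the finite set [X]. *)

From Stdlib Require Import Reals List Lra Lia Classical.
Open Scope R_scope.

Definition is_lower_bound (E : R -> Prop) (m : R) : Prop :=
  forall x, E x -> m <= x.

Definition is_glb (E : R -> Prop) (m : R) : Prop :=
  is_lower_bound E m /\ (forall b, is_lower_bound E b -> b <= m).

Lemma Rgt1_iff (x y : R) : Rgt1 x y <-> x + 1 < y \/ y + 1 < x.
Proof. unfold Rgt1, Rabs; destruct (Rcase_abs (x - y)); split; intros; lra. Qed.

Lemma bounded_hull_exists (E : R -> Prop) (t A B : R) :
  E t -> (forall s, E s -> A <= s <= B) ->
  exists lo hi, is_glb E lo /\ is_lub E hi /\ A <= lo <= t /\ t <= hi <= B.
Proof.
  intros Et HAB.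
  destruct (completeness E) as [hi [Hub Hlub]].
  { exists B; intros s Es; apply (HAB s Es). }
  { exists t; exact Et. }
  destruct (completeness (fun x => E (- x))) as [m [Hmub Hmlub]].
  { exists (- A); intros s Es; pose proof (HAB _ Es); lra. }
  { exists (- t); rewrite Ropp_involutive; exact Et. }
  assert (Hlo : is_glb E (- m)).
  { split.
    - intros s Es. assert (- s <= m) by (apply Hmub; rewrite Ropp_involutive; exact Es).
      lra.
    - intros b Hb. assert (m <= - b); [|lra].
      apply Hmlub; intros s Es; pose proof (Hb _ Es); lra. }
  exists (- m), hi; split; [exact Hlo|]; split; [split; assumption|].
  assert (- m <= t) by (apply Hlo; exact Et).
  assert (t <= hi) by (apply Hub; exact Et).
  assert (A <= - m) by (apply Hlo; intros s Es; apply (HAB s Es)).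
  assert (hi <= B) by (apply Hlub; intros s Es; apply (HAB s Es)).
  lra.
Qed.

Lemma unit_ball_contains_iff (E : R -> Prop) (lo hi t : R) :
  is_glb E lo -> is_lub E hi ->
  ((forall s, E s -> t - 1 <= s <= t + 1) <-> hi - 1 <= t <= lo + 1).
Proof.
  intros [Hlb Hglb] [Hub Hlub]; split.
  - intros Hball.
    assert (t - 1 <= lo) by (apply Hglb; intros s Es; apply (Hball s Es)).
    assert (hi <= t + 1) by (apply Hlub; intros s Es; apply (Hball s Es)).
    lra.
  - intros Ht s Es. pose proof (Hlb s Es). pose proof (Hub s Es). lra.
Qed.

Lemma finite_no_infinite_descent {X : Type} (lt : X -> X -> Prop) (P : X -> Prop) :
  finite_type X ->
  (forall u, ~ lt u u) ->
  (forall u v w, lt u v -> lt v w -> lt u w) ->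
  (forall w, P w -> exists q, P q /\ lt q w) ->
  forall w, ~ P w.
Proof.
  intros [enum Henum] Hirr Htrans Hdesc.
  assert (Hchain : forall k w, P w ->
    exists l, length l = k /\ NoDup l /\ forall u, In u l -> lt u w).
  { induction k as [|k IH]; intros w Pw.
    - exists nil; repeat split; [constructor | intros u []].
    - destruct (Hdesc w Pw) as [q [Pq Hqw]].
      destruct (IH q Pq) as [l [Hlen [Hnodup Hbelow]]].
      exists (q :: l); repeat split.
      + simpl; congruence.
      + constructor; [|exact Hnodup].
        intros Hq; exact (Hirr q (Hbelow q Hq)).
      + intros u [<-|Hu]; [exact Hqw | exact (Htrans _ _ _ (Hbelow u Hu) Hqw)]. }
  intros w Pw.
  destruct (Hchain (S (length enum)) w Pw) as [l [Hlen [Hnodup _]]].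
  pose proof (NoDup_incl_length Hnodup (fun u _ => Henum u)).
  lia.
Qed.

Section PMorphicImage.

Variables (X : Type) (Rx : X -> X -> Prop) (f : R -> X).
Hypothesis (Hpm : p_morphism Rgt1 Rx f) (Hsurj : surjective f).

Definition fibre (v : X) : R -> Prop := fun s => f s = v.

Definition fibre_hull (v : X) (lo hi : R) : Prop :=
  is_glb (fibre v) lo /\ is_lub (fibre v) hi.

Definition thin_hull (v : X) (lo hi : R) : Prop :=
  fibre_hull v lo hi /\ hi <= lo + 1.

Lemma fibre_hull_bounds v lo hi s : fibre_hull v lo hi -> f s = v -> lo <= s <= hi.
Proof. intros [[Hlb _] [Hub _]] Hs; split; [apply Hlb | apply Hub]; exact Hs. Qed.

Lemma rel_sym u v : Rx u v -> Rx v u.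
Proof.
  destruct Hpm as [Hforth Hback]; intros Huv.
  destruct (Hsurj u) as [s <-].
  destruct (Hback s v Huv) as [s' [Hss' <-]].
  apply Hforth; apply Rgt1_iff; apply Rgt1_iff in Hss'; lra.
Qed.

Lemma not_rel_iff_near t v :
  ~ Rx (f t) v <-> forall s, f s = v -> t - 1 <= s <= t + 1.
Proof.
  destruct Hpm as [Hforth Hback]; split.
  - intros Hnot s Hs.
    destruct (Rle_lt_dec (t - 1) s); destruct (Rle_lt_dec s (t + 1)); try lra;
      exfalso; apply Hnot; rewrite <- Hs; apply Hforth, Rgt1_iff; lra.
  - intros Hnear Hrel.
    destruct (Hback t v Hrel) as [s [Hts Hs]].
    apply Rgt1_iff in Hts; pose proof (Hnear s Hs); lra.
Qed.

Lemma not_rel_iff_hull t v lo hi :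
  fibre_hull v lo hi -> (~ Rx (f t) v <-> hi - 1 <= t <= lo + 1).
Proof.
  intros [Hlo Hhi]; rewrite not_rel_iff_near.
  exact (unit_ball_contains_iff _ _ _ t Hlo Hhi).
Qed.

Lemma rel_off_shadow t v lo hi :
  fibre_hull v lo hi -> Rx (f t) v -> t < hi - 1 \/ lo + 1 < t.
Proof.
  intros Hhull Hrel.
  destruct (Rlt_le_dec t (hi - 1)); [now left|].
  destruct (Rlt_le_dec (lo + 1) t); [now right|].
  exfalso; apply (proj2 (not_rel_iff_hull t v lo hi Hhull)); [lra | exact Hrel].
Qed.

Lemma fibre_hull_of_bounds v t A B :
  f t = v -> (forall s, f s = v -> A <= s <= B) ->
  exists lo hi, fibre_hull v lo hi /\ A <= lo <= t /\ t <= hi <= B.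
Proof.
  intros Ht HAB.
  destruct (bounded_hull_exists (fibre v) t A B Ht HAB) as (lo & hi & Hlo & Hhi & Hb).
  exists lo, hi; split; [split|]; assumption.
Qed.

Lemma irreflexive_thin_hull v : ~ Rx v v -> exists lo hi, thin_hull v lo hi.
Proof.
  intros Hirr.
  destruct (Hsurj v) as [t Ht].
  assert (Hnear : forall s, f s = v -> t - 1 <= s <= t + 1).
  { apply not_rel_iff_near; rewrite Ht; exact Hirr. }
  destruct (fibre_hull_of_bounds v t (t - 1) (t + 1) Ht Hnear) as (lo & hi & Hhull & _).
  exists lo, hi; split; [exact Hhull|].
  assert (hi - 1 <= lo); [|lra].
  apply (proj2 (proj1 Hhull)); intros s Hs.
  assert (Hs' : ~ Rx (f s) v) by (rewrite Hs; exact Hirr).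
  apply (not_rel_iff_hull s v lo hi Hhull) in Hs'; lra.
Qed.

Definition fibre_below (u v : X) : Prop :=
  exists s, f s = u /\ forall t, f t = v -> s < t.

Lemma fibre_below_irrefl u : ~ fibre_below u u.
Proof. intros [s [Hs Hlt]]; specialize (Hlt s Hs); lra. Qed.

Lemma fibre_below_trans u v w : fibre_below u v -> fibre_below v w -> fibre_below u w.
Proof.
  intros [s [Hs Huv]] [s' [Hs' Hvw]]; exists s; split; [exact Hs|].
  intros t Ht; specialize (Huv s' Hs'); specialize (Hvw t Ht); lra.
Qed.

(* Some point over [c] lies more than 1 to the right of some point over [w],
   yet the common shadow [[hc - 1, lw + 1]] of [w] and [c] has positive length. *)
Definition has_tight_partner (w : X) : Prop :=
  exists c lw hw lc hc a b, thin_hull w lw hw /\ thin_hull c lc hc /\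
    f a = w /\ f b = c /\ a + 1 < b /\ hc < lw + 2.

Section Descent.

Variables (w c : X) (lw hw lc hc a b : R).
Hypotheses (Hw : thin_hull w lw hw) (Hc : thin_hull c lc hc)
  (Ha : f a = w) (Hb : f b = c) (Hab : a + 1 < b) (Hgap : hc < lw + 2).

Lemma tight_bounds : lw <= a /\ lw <= hw /\ b <= hc /\ hc <= lc + 1 /\ hw <= lw + 1.
Proof.
  destruct Hw as [Hhw Hww]; destruct Hc as [Hhc Hwc].
  pose proof (fibre_hull_bounds _ _ _ _ Hhw Ha).
  pose proof (fibre_hull_bounds _ _ _ _ Hhc Hb).
  lra.
Qed.

Lemma tight_fibre_narrow : hw < lw + 1.
Proof.
  pose proof tight_bounds as Hbd.
  assert (Hwc : Rx w c).
  { rewrite <- Ha, <- Hb; apply (proj1 Hpm), Rgt1_iff; lra. }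
  assert (hw <= hc - 1); [|lra].
  destruct Hw as [[_ [_ Hlub]] _]; apply Hlub; intros s Hs.
  assert (Hsc : Rx (f s) c) by (rewrite Hs; exact Hwc).
  pose proof (fibre_hull_bounds w lw hw s (proj1 Hw) Hs).
  destruct (rel_off_shadow s c lc hc (proj1 Hc) Hsc); lra.
Qed.

Lemma right_shadow_endpoint :
  exists ln, thin_hull (f (lw + 1)) ln (lw + 1) /\ hc - 1 <= ln.
Proof.
  pose proof tight_bounds as Hbd.
  assert (Hnw : ~ Rx (f (lw + 1)) w) by (apply (not_rel_iff_hull _ _ lw hw (proj1 Hw)); lra).
  assert (Hnc : ~ Rx (f (lw + 1)) c) by (apply (not_rel_iff_hull _ _ lc hc (proj1 Hc)); lra).
  assert (Hfib : forall s, f s = f (lw + 1) -> hc - 1 <= s <= lw + 1).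
  { intros s Hs; rewrite <- Hs in Hnw, Hnc.
    apply (not_rel_iff_hull _ _ lw hw (proj1 Hw)) in Hnw.
    apply (not_rel_iff_hull _ _ lc hc (proj1 Hc)) in Hnc.
    lra. }
  destruct (fibre_hull_of_bounds _ (lw + 1) (hc - 1) (lw + 1) eq_refl Hfib)
    as (ln & hn & Hhull & Hlo & Hhi).
  replace hn with (lw + 1) in Hhull by lra.
  exists ln; split; [split; [exact Hhull | lra] | lra].
Qed.

Lemma left_shadow_endpoint ln :
  thin_hull (f (lw + 1)) ln (lw + 1) -> hc - 1 <= ln ->
  exists hq, thin_hull (f (hw - 1)) (hw - 1) hq.
Proof.
  intros Hn Hln.
  pose proof tight_bounds as Hbd; pose proof tight_fibre_narrow.
  assert (Hqw : ~ Rx (f (hw - 1)) w) by (apply (not_rel_iff_hull _ _ lw hw (proj1 Hw)); lra).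
  assert (Hqn : Rx (f (hw - 1)) (f (lw + 1))).
  { apply NNPP; intros Hnot.
    apply (not_rel_iff_hull _ _ ln (lw + 1) (proj1 Hn)) in Hnot; lra. }
  assert (Hfib : forall s, f s = f (hw - 1) -> hw - 1 <= s <= lw).
  { intros s Hs; rewrite <- Hs in Hqw, Hqn.
    apply (not_rel_iff_hull _ _ lw hw (proj1 Hw)) in Hqw.
    destruct (rel_off_shadow s _ ln (lw + 1) (proj1 Hn) Hqn); lra. }
  destruct (fibre_hull_of_bounds _ (hw - 1) (hw - 1) lw eq_refl Hfib)
    as (lq & hq & Hhull & Hlo & Hhi).
  replace lq with (hw - 1) in Hhull by lra.
  exists hq; split; [exact Hhull | lra].
Qed.

Lemma left_shadow_endpoint_below : fibre_below (f (hw - 1)) w.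
Proof.
  pose proof tight_fibre_narrow.
  exists (hw - 1); split; [reflexivity|].
  intros t Ht; pose proof (fibre_hull_bounds w lw hw t (proj1 Hw) Ht); lra.
Qed.

Lemma shadow_midpoint ln :
  thin_hull (f (lw + 1)) ln (lw + 1) -> hc - 1 <= ln ->
  exists lp hp, thin_hull (f ((lw + hc - 1) / 2)) lp hp /\
    lw <= lp /\ (lw + hc - 1) / 2 <= hp <= hc - 1.
Proof.
  intros Hn Hln.
  pose proof tight_bounds as Hbd.
  set (P := (lw + hc - 1) / 2).
  assert (HP : lw < P < hc - 1) by (unfold P; lra).
  assert (Hpw : ~ Rx (f P) w) by (apply (not_rel_iff_hull _ _ lw hw (proj1 Hw)); lra).
  assert (Hpn : ~ Rx (f P) (f (lw + 1)))
    by (apply (not_rel_iff_hull _ _ ln (lw + 1) (proj1 Hn)); lra).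
  assert (Hpc : Rx (f P) c).
  { apply NNPP; intros Hnot.
    apply (not_rel_iff_hull _ _ lc hc (proj1 Hc)) in Hnot; lra. }
  assert (Hfib : forall s, f s = f P -> lw <= s <= hc - 1).
  { intros s Hs; rewrite <- Hs in Hpw, Hpn, Hpc.
    apply (not_rel_iff_hull _ _ lw hw (proj1 Hw)) in Hpw.
    apply (not_rel_iff_hull _ _ ln (lw + 1) (proj1 Hn)) in Hpn.
    destruct (rel_off_shadow s c lc hc (proj1 Hc) Hpc); lra. }
  destruct (fibre_hull_of_bounds _ P lw (hc - 1) eq_refl Hfib)
    as (lp & hp & Hhull & Hlo & Hhi).
  exists lp, hp; split; [split; [exact Hhull | lra] | lra].
Qed.

(* The new partner of [f (hw - 1)] is [f (lw + 1)], unless the fibre of [w] is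
   a single point, in which case the common shadow would be degenerate. *)
Lemma tight_partner_descends : exists q, has_tight_partner q /\ fibre_below q w.
Proof.
  pose proof tight_bounds as Hbd; pose proof tight_fibre_narrow.
  destruct right_shadow_endpoint as (ln & Hn & Hln).
  destruct (left_shadow_endpoint ln Hn Hln) as (hq & Hq).
  exists (f (hw - 1)); split; [|exact left_shadow_endpoint_below].
  destruct (Rlt_le_dec lw hw).
  - exists (f (lw + 1)), (hw - 1), hq, ln, (lw + 1), (hw - 1), (lw + 1).
    repeat split; try apply Hq; try apply Hn; lra.
  - destruct (shadow_midpoint ln Hn Hln) as (lp & hp & Hp & Hlp & Hhp).
    exists (f ((lw + hc - 1) / 2)), (hw - 1), hq, lp, hp, (hw - 1), ((lw + hc - 1) / 2).
    repeat split; try apply Hq; try apply Hp; lra.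
Qed.

End Descent.

Lemma no_tight_partner w : finite_type X -> ~ has_tight_partner w.
Proof.
  intros Hfin.
  apply (finite_no_infinite_descent fibre_below has_tight_partner Hfin
           fibre_below_irrefl fibre_below_trans).
  intros v (c & lv & hv & lc & hc & a & b & Hv & Hc & Ha & Hb & Hab & Hgap).
  exact (tight_partner_descends v c lv hv lc hc a b Hv Hc Ha Hb Hab Hgap).
Qed.

Lemma tight_partner_of_common_neighbours w z x y a b :
  ~ Rx w w -> ~ Rx z z -> f a = w -> f b = z -> a + 1 < b ->
  ~ Rx x w -> ~ Rx x z -> ~ Rx y w -> ~ Rx y z -> x <> y ->
  has_tight_partner w.
Proof.
  intros Hww Hzz Ha Hb Hab Hxw Hxz Hyw Hyz Hxy.
  destruct (irreflexive_thin_hull w Hww) as (lw & hw & Hw).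
  destruct (irreflexive_thin_hull z Hzz) as (lz & hz & Hz).
  destruct (Hsurj x) as [px <-]; destruct (Hsurj y) as [py <-].
  apply (not_rel_iff_hull _ _ lw hw (proj1 Hw)) in Hxw, Hyw.
  apply (not_rel_iff_hull _ _ lz hz (proj1 Hz)) in Hxz, Hyz.
  pose proof (fibre_hull_bounds _ _ _ _ (proj1 Hw) Ha).
  pose proof (fibre_hull_bounds _ _ _ _ (proj1 Hz) Hb).
  exists z, lw, hw, lz, hz, a, b; repeat split; try apply Hw; try apply Hz; auto.
  destruct (Rlt_le_dec hz (lw + 2)); [assumption|].
  exfalso; apply Hxy; f_equal; lra.
Qed.

Lemma maximal_anti_clique_overlap (S1 S2 : X -> Prop) z x y :
  finite_type X -> maximal_anti_clique Rx S1 -> anti_clique Rx S2 ->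
  S2 z -> ~ S1 z -> S1 x -> S2 x -> S1 y -> S2 y -> x = y.
Proof.
  intros Hfin [HA1 Hmax1] HA2 H2z H1z H1x H2x H1y H2y.
  apply NNPP; intros Hxy.
  destruct (classic (exists w, S1 w /\ Rx w z)) as [[w [H1w Hwz]]|Hnone].
  - destruct (Hsurj w) as [a Ha].
    rewrite <- Ha in Hwz.
    destruct (proj2 Hpm a z Hwz) as [b [Hab Hb]].
    apply Rgt1_iff in Hab as [Hab|Hab].
    + apply (no_tight_partner w Hfin).
      apply (tight_partner_of_common_neighbours w z x y a b); auto.
    + apply (no_tight_partner z Hfin).
      apply (tight_partner_of_common_neighbours z w x y b a); auto.
  - apply H1z, (Hmax1 (fun u => S1 u \/ u = z)); [|now left | now right].
    intros u v [Hu| ->] [Hv| ->] Huv.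
    + exact (HA1 u v Hu Hv Huv).
    + exact (Hnone (ex_intro _ u (conj Hu Huv))).
    + exact (Hnone (ex_intro _ v (conj Hv (rel_sym _ _ Huv)))).
    + exact (HA2 z z H2z H2z Huv).
Qed.

End PMorphicImage.

Theorem lemma5p7 (X : Type) (Rx : X -> X -> Prop) (f : R -> X) :
  finite_type X ->
  p_morphism Rgt1 Rx f ->
  surjective f ->
  small_anti_clique_overlaps Rx.
Proof.
  intros Hfin Hpm Hsurj S1 S2 Hmax1 Hmax2 Hneq x y H1x H2x H1y H2y.
  destruct (classic (exists z, S2 z /\ ~ S1 z)) as [[z [H2z H1z]]|Hsub21].
  - exact (maximal_anti_clique_overlap X Rx f Hpm Hsurj S1 S2 z x y
             Hfin Hmax1 (proj1 Hmax2) H2z H1z H1x H2x H1y H2y).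
  - destruct (classic (exists z, S1 z /\ ~ S2 z)) as [[z [H1z H2z]]|Hsub12].
    + exact (maximal_anti_clique_overlap X Rx f Hpm Hsurj S2 S1 z x y
               Hfin Hmax2 (proj1 Hmax1) H1z H2z H2x H1x H2y H1y).
    + exfalso; apply Hneq; intros u; split; intros Hu; apply NNPP; intros Hnot.
      * exact (Hsub12 (ex_intro _ u (conj Hu Hnot))).
      * exact (Hsub21 (ex_intro _ u (conj Hu Hnot))).
Qed.
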